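(* Let $n\ge2$ and let $\mathcal C=X_1\cap\dots\cap X_n\subseteq\mathbb R^{n+1}$ be a tropical complete intersection curve. Then every vertex of $\mathcal C$ has valence 3, i.e. is contained in exactly three edges (bounded or unbounded) of $\mathcal C$.
   Context: Over $(\mathbb R,\max,+)$, a tropical polynomial is $f(x)=\max_{a\in\mathcal A}\{\lambda_a+a\cdot x\}$, $\mathcal A\subseteq\mathbb Z^{m}$ finite, $\lambda_a\in\mathbb R$; Newton polytope $\Delta_f=\operatorname{conv}(\mathcal A)$; lifted polytope $\tilde\Delta_f=\operatorname{conv}\{(a,t):a\in\mathcal A,t\le\lambda_a\}$, whose bounded faces project to a regular lattice subdivision $\operatorname{Subdiv}(f)$ of $\Delta_f$. $V_{tr}(f)$ is the non-linear locus of $f$, a polyhedral complex of pure dimension $m-1$, with a bijection $C\mapsto C^\vee$ from $k$-cells of $V_{tr}(f)$ to $(m-k)$-cells of $\operatorname{Subdiv}(f)$, $C^\vee=\operatorname{conv}\{a:\lambda_a+a\cdot x=f(x)\}$ for $x$ in the relative interior of $C$. $V_{tr}(f)$ is smooth if every maximal cell of $\operatorname{Subdiv}(f)$ is a lattice simplex of volume $1/m!$. For $X_i=V_{tr}(f_i)$, $i=1,\dots,n$, let $U=X_1\cup\dots\cup X_n=V_{tr}(f_1\odot\cdots\odot f_n)$ (the product polynomial has function $f_1+\dots+f_n$), and $\operatorname{Subdiv}_U=\operatorname{Subdiv}(f_1\odot\cdots\odot f_n)$. Since $\tilde\Delta_{f_1\odot\cdots\odot f_n}=\tilde\Delta_{f_1}+\dots+\tilde\Delta_{f_n}$,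 each bounded face decomposes uniquely as a Minkowski sum of bounded faces of the $\tilde\Delta_{f_i}$; projecting gives the privileged representation $\Lambda=\Lambda_1+\dots+\Lambda_n$ of each cell $\Lambda\in\operatorname{Subdiv}_U$, $\Lambda_i\in\operatorname{Subdiv}(f_i)$. Each cell $C$ of $I=X_1\cap\dots\cap X_n$ is uniquely $C_1\cap\dots\cap C_n$ with $C_i$ a cell of $X_i$ containing $C$ in its relative interior; $C$ is a cell of $U$ and $C^\vee\in\operatorname{Subdiv}_U$ has privileged representation $C_1^\vee+\dots+C_n^\vee$. The intersection is transversal if for all $J\subseteq\{1,\dots,n\}$, $|J|\ge2$, $\bigcap_{i\in J}X_i$ has dimension $m-|J|$ and every cell $C$ of it satisfies $\dim C^\vee=\sum_{i\in J}\dim C_i^\vee$ (duals w.r.t. $\bigcup_{i\in J}X_i$). A tropical complete intersection curve is a transversal intersection $\mathcal C=X_1\cap\dots\cap X_n$ of $n\ge 2$ smooth tropical hypersurfaces in $\mathbb R^{n+1}$ (so $m=n+1$); it is a one-dimensional polyhedral complex, some of whose edges are unbounded. *)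

From HB Require Import structures.
From mathcomp Require Import all_boot all_order all_algebra.
From mathcomp Require Import reals.

Set Implicit Arguments.
Unset Strict Implicit.
Unset Printing Implicit Defensive.

Import Order.TTheory GRing.Theory Num.Theory.
Local Open Scope ring_scope.

(* A tropical polynomial f(x) = max_{a in A} (lambda_a + a.x):
   A = tp_supp (finite, duplicate free), lambda_a = tp_coef a. *)
Record tpoly (R : realType) (m : nat) := TPoly {
  tp_supp : seq 'rV[int]_m;
  tp_coef : 'rV[int]_m -> R;
  tp_uniq : uniq tp_supp }.

Section Trop.
Variables (R : realType).

Definition rvR (m : nat) (a : 'rV[int]_m) : 'rV[R]_m := map_mx (fun z : int => z%:~R) a.

Definition tdot (m : nat) (a : 'rV[int]_m) (x : 'rV[R]_m) : R :=
  \sum_(j < m) (a ord0 j)%:~R * x ord0 j.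

Definition tmon (m : nat) (f : tpoly R m) (a : 'rV[int]_m) (x : 'rV[R]_m) : R :=
  tp_coef f a + tdot a x.

Definition act (m : nat) (f : tpoly R m) (x : 'rV[R]_m) : seq 'rV[int]_m :=
  [seq a <- tp_supp f | all (fun b => tmon f b x <= tmon f a x) (tp_supp f)].

(* x lies on the tropical hypersurface V_tr(f): the maximum is attained
   by at least two distinct monomials (non-linear locus of f). *)
Definition inV (m : nat) (f : tpoly R m) (x : 'rV[R]_m) : Prop :=
  (1 < size (act f x))%N.

Definition in_conv (m : nat) (s : seq 'rV[int]_m) (p : 'rV[R]_m) : Prop :=
  exists w : 'I_(size s) -> R,
    [/\ forall i, 0 <= w i, \sum_i w i = 1 &
        p = \sum_i w i *: rvR (nth 0 s i)].

(* the cell conv{a : lambda_a + a.x = f(x)} of Subdiv(f) dual to the cell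
   of V_tr(f) containing x in its relative interior *)
Definition dual_cell (m : nat) (f : tpoly R m) (x : 'rV[R]_m) : 'rV[R]_m -> Prop :=
  in_conv (act f x).

Definition affdim_ge (m : nat) (P : 'rV[R]_m -> Prop) (k : nat) : Prop :=
  exists p : 'I_k.+1 -> 'rV[R]_m,
    (forall i, P (p i)) /\
    \rank (\matrix_(i < k, j < m) (p (lift ord0 i) ord0 j - p ord0 ord0 j)) = k.

Definition adim (m : nat) (P : 'rV[R]_m -> Prop) (k : nat) : Prop :=
  affdim_ge P k /\ ~ affdim_ge P k.+1.

(* Smoothness: every maximal cell of Subdiv(f) (cells are exactly the
   conv(act f x), x in R^m) is a lattice simplex of volume 1/m!, i.e. it
   is conv{a_0,..,a_m} with a_i lattice points and |det(a_i - a_0)| = 1. *)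
Definition maximal_dual_cell (m : nat) (f : tpoly R m) (x : 'rV[R]_m) : Prop :=
  forall y, (forall p, dual_cell f x p -> dual_cell f y p) ->
            (forall p, dual_cell f y p -> dual_cell f x p).

Definition smooth (m : nat) (f : tpoly R m) : Prop :=
  forall x, maximal_dual_cell f x ->
    exists a : 'I_m.+1 -> 'rV[int]_m,
      [/\ forall i, a i \in act f x,
          forall p, dual_cell f x p <-> in_conv [seq a i | i <- enum 'I_m.+1] p &
          `|\det (\matrix_(i < m, j < m) (a (lift ord0 i) ord0 j - a ord0 ord0 j))| = 1 :> int].

Definition inIJ (n m : nat) (F : 'I_n -> tpoly R m) (J : {set 'I_n}) (x : 'rV[R]_m) : Prop :=
  forall i, i \in J -> inV (F i) x.

(* the (closed) cell C = /\_{i in J} C_i of /\_{i in J} X_i containing x in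
   its relative interior, where C_i is the cell of X_i containing x in its
   relative interior, i.e. C_i = {y | act(f_i, x) is a subset of act(f_i, y)} *)
Definition cellJ (n m : nat) (F : 'I_n -> tpoly R m) (J : {set 'I_n}) (x : 'rV[R]_m)
  : 'rV[R]_m -> Prop :=
  fun y => forall i, i \in J -> {subset act (F i) x <= act (F i) y}.

Definition dual_cellJ (n m : nat) (F : 'I_n -> tpoly R m) (J : {set 'I_n}) (x : 'rV[R]_m)
  : 'rV[R]_m -> Prop :=
  fun p => exists q : 'I_n -> 'rV[R]_m,
    (forall i, i \in J -> dual_cell (F i) x (q i)) /\ p = \sum_(i in J) q i.

Definition complex_dimJ (n m : nat) (F : 'I_n -> tpoly R m) (J : {set 'I_n}) (k : nat) : Prop :=
  (exists x, inIJ F J x /\ adim (cellJ F J x) k) /\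
  (forall x, inIJ F J x -> ~ affdim_ge (cellJ F J x) k.+1).

Definition transversal_inter (n m : nat) (F : 'I_n -> tpoly R m) : Prop :=
  forall J : {set 'I_n}, (2 <= #|J|)%N ->
    complex_dimJ F J (m - #|J|) /\
    (forall x, inIJ F J x ->
       forall d : 'I_n -> nat, (forall i, i \in J -> adim (dual_cell (F i) x) (d i)) ->
         adim (dual_cellJ F J x) (\sum_(i in J) d i)).

Definition is_vertex (n m : nat) (F : 'I_n -> tpoly R m) (v : 'rV[R]_m) : Prop :=
  inIJ F setT v /\ adim (cellJ F setT v) 0.

Definition is_edge (n m : nat) (F : 'I_n -> tpoly R m) (E : 'rV[R]_m -> Prop) : Prop :=
  exists x, [/\ inIJ F setT x, E = cellJ F setT x & adim E 1].

End Trop.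

(* At a vertex v every X_i is singular, so each active set A_i of f_i at v has at
   least two points.  Smoothness makes each A_i affinely independent (it sits in a
   unimodular simplex, whose only lattice points are its vertices), so conv A_i has
   dimension |A_i| - 1 and transversality gives sum_i (|A_i| - 1) <= n + 1.
   Conversely the edge vectors of the A_i span R^(n+1): a common orthogonal direction
   would move v inside its own cell.  Hence sum_i (|A_i| - 1) = n + 1, one A_j has
   three points and all other A_i have two, and the edge vectors form a basis.  A
   direction constant on every A_i, i <> j, and maximal on A_j exactly off a chosen
   r in A_j leads from v into an edge; conversely every edge through v keeps the
   A_i, i <> j, and drops exactly one point r of A_j.  The three choices of r give
   the three edges. *)

From HB Require Import structures.
From mathcomp Require Import all_boot all_order all_algebra.
From mathcomp Require Import reals boolp.
From mathcomp Require Import ring lra zify.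

Set Implicit Arguments.
Unset Strict Implicit.
Unset Printing Implicit Defensive.

Import Order.TTheory GRing.Theory Num.Theory.
Local Open Scope ring_scope.

Section TropicalMonomials.
Variables (R : realType) (m : nat).
Implicit Types (f : tpoly R m) (a b : 'rV[int]_m) (x w : 'rV[R]_m).

Lemma tdotD a x y : tdot a (x + y) = tdot a x + tdot a y.
Proof. by rewrite /tdot -big_split; apply: eq_bigr => j _; rewrite mxE mulrDr. Qed.

Lemma tdotZ a (e : R) x : tdot a (e *: x) = e * tdot a x.
Proof. by rewrite /tdot mulr_sumr; apply: eq_bigr => j _; rewrite mxE mulrCA. Qed.

Lemma tdotBl a b x : tdot (a - b) x = tdot a x - tdot b x.
Proof. by rewrite /tdot -sumrB; apply: eq_bigr => j _; rewrite !mxE intrB mulrBl. Qed.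

Lemma tmon_line f a x (e : R) w : tmon f a (x + e *: w) = tmon f a x + e * tdot a w.
Proof. by rewrite /tmon tdotD tdotZ addrA. Qed.

Lemma mem_act f x a :
  (a \in act f x) = (a \in tp_supp f) && all (fun b => tmon f b x <= tmon f a x) (tp_supp f).
Proof. by rewrite /act mem_filter andbC. Qed.

Lemma act_uniq f x : uniq (act f x).
Proof. by rewrite filter_uniq // tp_uniq. Qed.

End TropicalMonomials.

Definition near0 (R : realType) (P : R -> Prop) : Prop :=
  exists2 d : R, 0 < d & forall e, 0 < e -> e <= d -> P e.

Lemma near0_all (R : realType) (X : eqType) (P : X -> R -> Prop) (s : seq X) :
  (forall x, x \in s -> near0 (P x)) -> near0 (fun e => forall x, x \in s -> P x e).
Proof.
elim: s => [|x s IH] H; first by exists 1.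
have [d1 d1p H1] := H x (mem_head _ _).
have [d2 d2p H2] := IH (fun y hy => H y ltac:(by rewrite in_cons hy orbT)).
exists (Num.min d1 d2); first by rewrite lt_min d1p d2p.
move=> e e0; rewrite le_min => /andP[ed1 ed2] y; rewrite in_cons => /orP[/eqP->|hy].
  exact: H1.
exact: H2.
Qed.

Lemma near0_mul_lt (R : realType) (g h : R) : 0 < g -> near0 (fun e => e * h < g).
Proof.
move=> g0; have h1 : 0 < `|h| + 1 by rewrite ltr_pwDr // normr_ge0.
exists (g / (`|h| + 1)) => [|e e0 ed]; first by rewrite divr_gt0.
apply: (le_lt_trans (ler_norm _)); rewrite normrM (gtr0_norm e0).
apply: (le_lt_trans (ler_wpM2r (normr_ge0 _) ed)).
by rewrite mulrAC ltr_pdivrMr // ltr_pM2l // ltrDl.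
Qed.

(* Strict inequalities between monomials at [v] survive a small move, and among
   the monomials tied at [v] those growing fastest along [w] win. *)
Lemma act_near0 (R : realType) m (f : tpoly R m) (v w : 'rV[R]_m) :
  near0 (fun e => forall a, (a \in act f (v + e *: w)) =
    (a \in act f v) && all (fun b => tdot b w <= tdot a w) (act f v)).
Proof.
pose s := [seq p <- [seq (b, c) | b <- tp_supp f, c <- tp_supp f]
          | tmon f p.2 v < tmon f p.1 v].
have [d d0 Hd] : near0 (fun e => forall p, p \in s ->
    tmon f p.2 (v + e *: w) < tmon f p.1 (v + e *: w)).
  apply: near0_all => p; rewrite mem_filter => /andP[hp _]; rewrite -subr_gt0 in hp.
  have [d d0 H] := near0_mul_lt (tdot p.2 w - tdot p.1 w) hp.
  exists d => // e e0 ed; rewrite !tmon_line -subr_gt0.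
  by have := H e e0 ed; rewrite -subr_gt0 mulrBr; congr (0 < _); ring.
exists d => // e e0 ed a.
have Hs b c : b \in tp_supp f -> c \in tp_supp f -> tmon f c v < tmon f b v ->
    tmon f c (v + e *: w) < tmon f b (v + e *: w).
  move=> hb hc hbc; apply: (Hd e e0 ed (b, c)).
  by rewrite mem_filter /= hbc; apply/allpairsP; exists (b, c).
apply/idP/idP.
- rewrite mem_act => /andP[ha /allP hall].
  have hav : a \in act f v.
    rewrite mem_act ha /=; apply/allP => b hb; rewrite leNgt; apply/negP => hlt.
    by have := hall b hb; rewrite leNgt (Hs b a hb ha hlt).
  rewrite hav /=; apply/allP => b hb.
  move: hb hav; rewrite !mem_act => /andP[hb /allP hb2] /andP[_ /allP ha2].
  have eq1 : tmon f b v = tmon f a v by apply/eqP; rewrite eq_le ha2 // hb2.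
  by have := hall b hb; rewrite !tmon_line eq1 lerD2l ler_pM2l.
- case/andP => hav /allP hmax; rewrite mem_act.
  move: (hav); rewrite mem_act => /andP[ha /allP ha2]; rewrite ha /=.
  apply/allP => c hc.
  have := ha2 c hc; rewrite le_eqVlt => /orP[/eqP hca|hlt]; last exact/ltW/Hs.
  have hcv : c \in act f v.
    by rewrite mem_act hc /=; apply/allP => b hb; rewrite hca; exact: ha2.
  by rewrite !tmon_line hca lerD2l ler_pM2l // hmax.
Qed.

Lemma act_family_near0 (R : realType) n m (F : 'I_n -> tpoly R m) (v w : 'rV[R]_m) :
  exists2 e : R, 0 < e & forall i a,
    (a \in act (F i) (v + e *: w)) =
    (a \in act (F i) v) && all (fun b => tdot b w <= tdot a w) (act (F i) v).
Proof.
have [d d0 Hd] := near0_all (fun i _ => act_near0 (F i) v w) (s := enum 'I_n).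
by exists d => // i a; apply: Hd => //; rewrite mem_enum.
Qed.

Section ConvexHulls.
Variables (R : realType) (m : nat).
Implicit Types (s t : seq 'rV[int]_m) (p : 'rV[R]_m).

Definition edge_mx (a0 : 'rV[int]_m) s : 'M[R]_(size s, m) :=
  \matrix_(k < size s, j < m) (rvR R (nth 0 s k) - rvR R a0) 0 j.

Lemma in_conv_nth s k : (k < size s)%N -> in_conv s (rvR R (nth 0 s k)).
Proof.
move=> hk; exists (fun i : 'I_(size s) => ((i == Ordinal hk) : nat)%:R); split.
- by move=> i; rewrite ler0n.
- by rewrite (bigD1 (Ordinal hk)) //= eqxx big1 ?addr0 // => i /negbTE ->.
- rewrite (bigD1 (Ordinal hk)) //= eqxx scale1r big1 ?addr0 // => i /negbTE ->.
  by rewrite scale0r.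
Qed.

Lemma in_conv_mem s e : e \in s -> in_conv s (rvR R e).
Proof. by move=> he; rewrite -(nth_index 0 he); apply: in_conv_nth; rewrite index_mem. Qed.

Lemma in_conv_trans s t p :
  (forall e, e \in t -> in_conv s (rvR R e)) -> in_conv t p -> in_conv s p.
Proof.
move=> Ht [w [w0 w1 ->]].
have [u Hu] := fin_all_exists (fun i : 'I_(size t) => Ht _ (mem_nth 0 (ltn_ord i))).
exists (fun k => \sum_i w i * u i k); split.
- move=> k; apply: sumr_ge0 => i _; apply: mulr_ge0 => //.
  by have [] := Hu i.
- rewrite exchange_big /= -[RHS]w1; apply: eq_bigr => i _.
  by rewrite -mulr_sumr; have [_ -> _] := Hu i; rewrite mulr1.
- rewrite (eq_bigr (fun i => \sum_k (w i * u i k) *: rvR R (nth 0 s k))); last first.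
    move=> i _; have [_ _ ->] := Hu i; rewrite scaler_sumr.
    by apply: eq_bigr => k _; rewrite scalerA.
  by rewrite exchange_big /=; apply: eq_bigr => k _; rewrite scaler_suml.
Qed.

Lemma in_conv_edge_mx a0 s p :
  in_conv (a0 :: s) p -> exists c : 'rV[R]_(size s), p - rvR R a0 = c *m edge_mx a0 s.
Proof.
move=> [w [w0 w1 ->]]; exists (\row_l w (lift ord0 l)).
have -> : rvR R a0 = \sum_i w i *: rvR R a0 by rewrite -scaler_suml w1 scale1r.
rewrite mulmx_sum_row -sumrB big_ord_recl /= subrr add0r; apply: eq_bigr => l _.
by rewrite mxE -scalerBr; congr (_ *: _); apply/rowP => j; rewrite !mxE.
Qed.

Lemma affdim_ge_leq (P : 'rV[R]_m -> Prop) k : affdim_ge P k -> (k <= m)%N.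
Proof. by move=> [p [_ <-]]; apply: rank_leq_col. Qed.

Lemma affdim_ge1 (P : 'rV[R]_m -> Prop) x y : P x -> P y -> x <> y -> affdim_ge P 1.
Proof.
move=> hx hy hxy; exists (fun k : 'I_2 => if (k : nat) == 0%N then x else y).
split; first by move=> k; case: ifP.
set M := \matrix_(i < 1, j < m) _.
suff : \rank M != 0%N by have := rank_leq_row M; lia.
rewrite mxrank_eq0; apply/eqP => h.
apply: hxy; apply/rowP => j; apply/eqP; rewrite eq_sym -subr_eq0.
by have := congr1 (fun M : 'M[R]_(1, m) => M 0 j) h; rewrite !mxE lift0 => ->.
Qed.

(* Every point of the hull lies in [a0 + rowspace (edge_mx a0 s)]. *)
Lemma adim_conv a0 s :
  \rank (edge_mx a0 s) = size s -> adim (in_conv (R := R) (a0 :: s)) (size s).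
Proof.
move=> Hr; split.
  exists (fun k : 'I_(size s).+1 => rvR R (nth 0 (a0 :: s) k)); split.
    by move=> k; apply: in_conv_nth.
  by rewrite -[in RHS]Hr; congr (\rank _); apply/matrixP => i j; rewrite !mxE.
move=> [p [Hp Hrk]].
have [c Hc] := fin_all_exists (fun k => in_conv_edge_mx (Hp k)).
pose C := \matrix_(i < (size s).+1) (c (lift ord0 i) - c ord0).
have E : \matrix_(i < (size s).+1, j < m) (p (lift ord0 i) ord0 j - p ord0 ord0 j)
         = C *m edge_mx a0 s.
  apply/row_matrixP => i; rewrite row_mul rowK mulmxBl -!Hc.
  by apply/rowP => j; rewrite !mxE; ring.
have := leq_trans (mxrankM_maxr C (edge_mx a0 s)) (rank_leq_row _).
by rewrite -E Hrk ltnn.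
Qed.

End ConvexHulls.

Definition affine_free (R : realType) m k (p : 'I_k -> 'rV[R]_m) : Prop :=
  forall mu : 'I_k -> R, \sum_i mu i *: p i = 0 -> \sum_i mu i = 0 -> forall i, mu i = 0.

Lemma sum_eq_scale (R : realType) (V : lmodType R) k (x : 'I_k) (F : 'I_k -> V) :
  \sum_(i < k) ((x == i)%:R : R) *: F i = F x.
Proof.
rewrite (bigD1 x) //= eqxx scale1r big1 ?addr0 // => i hi.
by rewrite eq_sym (negbTE hi) scale0r.
Qed.

Lemma sum_eq_nat (R : realType) k (x : 'I_k) : \sum_(i < k) ((x == i)%:R : R) = 1.
Proof. by rewrite (bigD1 x) //= eqxx big1 ?addr0 // => i hi; rewrite eq_sym (negbTE hi). Qed.

(* A linear relation among the edge vectors is an affine relation among the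
   vertices of the family. *)
Lemma affine_free_edge_mx_rank (R : realType) m k (p : 'I_k -> 'rV[int]_m) a0 s :
  affine_free (fun i => rvR R (p i)) -> uniq (a0 :: s) ->
  (forall e, e \in a0 :: s -> exists i, e = p i) ->
  \rank (edge_mx R a0 s) = size s.
Proof.
move=> hfree hu hin; pose s0 := a0 :: s.
have [i0 _] := hin a0 (mem_head _ _).
pose sg l := odflt i0 [pick i | p i == nth 0 s0 l].
have hsg l : (l < size s0)%N -> p (sg l) = nth 0 s0 l.
  move=> hl; rewrite /sg; case: pickP => [i /eqP //|hn].
  by have [i hi] := hin _ (mem_nth 0 hl); have := hn i; rewrite -hi eqxx.
have hsg_inj l l' : (l < size s0)%N -> (l' < size s0)%N -> (sg l == sg l') = (l == l').
  move=> hl hl'; apply/idP/idP => [/eqP h|/eqP -> //].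
  by rewrite -(nth_uniq 0 hl hl' hu) -hsg // -hsg // h.
suff key (c : 'rV[R]_(size s)) : c *m edge_mx R a0 s = 0 -> c = 0.
  apply/eqP; rewrite -[_ == _]/(row_free _) -kermx_eq0.
  apply/eqP/row_matrixP => i; rewrite row0; apply: key.
  by rewrite -row_mul mulmx_ker row0.
move=> hc.
pose mu i := \sum_(l < size s) c 0 l * ((sg l.+1 == i)%:R - (sg 0%N == i)%:R).
have hmu_vec : \sum_i mu i *: rvR R (p i) = c *m edge_mx R a0 s.
  rewrite mulmx_sum_row.
  under eq_bigr => i _ do rewrite scaler_suml.
  rewrite exchange_big /=; apply: eq_bigr => l _.
  under eq_bigr => i _ do rewrite -scalerA scalerBl.
  rewrite -scaler_sumr sumrB !sum_eq_scale hsg ?hsg //= ?ltnS //.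
  by congr (_ *: _); apply/rowP => j; rewrite !mxE.
have hmu_sum : \sum_i mu i = 0.
  rewrite /mu exchange_big /= big1 // => l _.
  by rewrite -mulr_sumr sumrB !sum_eq_nat subrr mulr0.
have hmu0 := hfree mu (etrans hmu_vec hc) hmu_sum.
apply/rowP => l0; rewrite [RHS]mxE.
have := hmu0 (sg l0.+1); rewrite /mu.
under eq_bigr => l _ do rewrite !hsg_inj //= ?ltnS // eqSS eq_sym subr0.
rewrite (bigD1 l0) //= eqxx mulr1 big1 ?addr0 // => l hl.
by case: eqP => [/ord_inj hll|_]; [rewrite hll eqxx in hl | rewrite mulr0].
Qed.

Section UnimodularSimplex.
Variables (R : realType) (m : nat) (a : 'I_m.+1 -> 'rV[int]_m).

Definition simplex_mx : 'M[int]_m := \matrix_(i, j) (a (lift ord0 i) 0 j - a ord0 0 j).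

Hypothesis unimodular : `|\det simplex_mx| = 1.

Let simplex_mxR : 'M[R]_m := map_mx (fun z : int => z%:~R) simplex_mx.

Let row_simplex_mxR l : row l simplex_mxR = rvR R (a (lift ord0 l)) - rvR R (a ord0).
Proof. by apply/rowP => j; rewrite !mxE intrB. Qed.

Let simplex_mxR_free : row_free simplex_mxR.
Proof.
rewrite row_free_unit unitmxE unitfE det_map_mx intr_eq0.
by apply/eqP => h; move: unimodular; rewrite h normr0.
Qed.

Let mul_simplex_mxR (c : 'I_m.+1 -> R) :
  \row_l c (lift ord0 l) *m simplex_mxR =
  \sum_(l < m) c (lift ord0 l) *: rvR R (a (lift ord0 l)) -
  (\sum_(l < m) c (lift ord0 l)) *: rvR R (a ord0).
Proof.
rewrite mulmx_sum_row scaler_suml -sumrB.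
by apply: eq_bigr => l _; rewrite row_simplex_mxR mxE scalerBr.
Qed.

Lemma unimodular_affine_free : affine_free (fun k => rvR R (a k)).
Proof.
move=> mu; rewrite !big_ord_recl /= => hvec hsum.
have hs : \sum_(l < m) mu (lift ord0 l) = - mu ord0.
  by apply/eqP; rewrite -addr_eq0 addrC hsum.
have hrow : \row_l mu (lift ord0 l) *m simplex_mxR = 0 *m simplex_mxR.
  rewrite mul0mx mul_simplex_mxR hs scaleNr opprK.
  by rewrite addrC.
have hl l : mu (lift ord0 l) = 0.
  have := congr1 (fun M : 'M[R]_(1, m) => M 0 l) (row_free_inj simplex_mxR_free hrow).
  by rewrite !mxE.
have h0 : mu ord0 = 0 by apply/eqP; rewrite -oppr_eq0 -hs big1.
by move=> k; case: (unliftP ord0 k) => [l ->|->].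
Qed.

Lemma int_row_sum_le1 (z : 'rV[int]_m) :
  (forall l, 0 <= z 0 l) -> \sum_l z 0 l <= 1 -> z = 0 \/ exists l, z = delta_mx 0 l.
Proof.
move=> hz0 hsum; case: (pselect (exists l, z 0 l != 0)) => [[l hl]|hn]; last first.
  by left; apply/rowP => j; rewrite mxE; apply: contra_notP hn => hj; exists j; apply/eqP.
right; exists l.
have hzl : z 0 l = 1.
  have : z 0 l <= 1.
    apply: le_trans hsum; rewrite (bigD1 l) //= lerDl.
    by apply: sumr_ge0 => i _; apply: hz0.
  by have := hz0 l; move: hl; lia.
apply/rowP => j; rewrite mxE eqxx /=; case: (eqVneq j l) => [->//|hjl].
move: hsum; rewrite (bigD1 l) //= (bigD1 j) //= hzl.
set S := (X in (_ + (_ + X) <= _)).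
have : 0 <= S by apply: sumr_ge0 => i _; apply: hz0.
by have := hz0 j; lia.
Qed.

(* Cramer's rule: the barycentric coordinates of a lattice point with respect to
   a unimodular simplex are integers, hence 0 or 1 when they are convex weights. *)
Lemma unimodular_lattice_vertex (w : 'I_m.+1 -> R) (e : 'rV[int]_m) :
  (forall i, 0 <= w i) -> \sum_i w i = 1 -> rvR R e = \sum_i w i *: rvR R (a i) ->
  exists k, e = a k.
Proof.
move=> w0 w1 he.
pose z : 'rV[int]_m := \det simplex_mx *: ((e - a ord0) *m \adj simplex_mx).
have hz : z *m simplex_mx = e - a ord0.
  have hdd : \det simplex_mx * \det simplex_mx = 1.
    by rewrite -[LHS]ger0_norm ?normrM ?unimodular ?mulr1 // -expr2 sqr_ge0.
  by rewrite -scalemxAl -mulmxA mul_adj_mx mul_mx_scalar scalerA hdd scale1r.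
move: he w1; rewrite !big_ord_recl /= => he w1.
have hw : \row_l w (lift ord0 l) = map_mx (fun x : int => x%:~R) z.
  apply: (row_free_inj simplex_mxR_free).
  rewrite /simplex_mxR -map_mxM hz map_mxB mul_simplex_mxR.
  have -> : \sum_(i < m) w (lift ord0 i) = 1 - w ord0 by move: w1; lra.
  have -> : \sum_(i < m) w (lift ord0 i) *: rvR R (a (lift ord0 i)) =
            rvR R e - w ord0 *: rvR R (a ord0) by rewrite he [RHS]addrC addKr.
  by rewrite scalerBl scale1r opprB addrA subrK.
have hzl l : w (lift ord0 l) = (z 0 l)%:~R.
  by have := congr1 (fun M : 'M[R]_(1, m) => M 0 l) hw; rewrite !mxE.
have hz0 l : 0 <= z 0 l by rewrite -(ler0z R) -hzl.
have hsum : \sum_l z 0 l <= 1.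
  rewrite -(ler_int R) rmorph_sum /= -(eq_bigr _ (fun l _ => hzl l)).
  by have := w0 ord0; move: w1; lra.
case: (int_row_sum_le1 hz0 hsum) => [hz_0|[l hz_l]].
  by exists ord0; apply/eqP; rewrite -subr_eq0 -hz hz_0 mul0mx.
exists (lift ord0 l); apply/rowP => j.
have := congr1 (fun M : 'M[int]_(1, m) => M 0 j) hz.
by rewrite hz_l -rowE !mxE => h; apply: (addIr (- a ord0 0 j)); rewrite h.
Qed.

End UnimodularSimplex.

Lemma in_conv_enum (R : realType) m k (a : 'I_k -> 'rV[int]_m) (p : 'rV[R]_m) :
  in_conv [seq a i | i <- enum 'I_k] p ->
  exists w : 'I_k -> R, [/\ forall i, 0 <= w i, \sum_i w i = 1 &
                          p = \sum_i w i *: rvR R (a i)].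
Proof.
move=> [w' [w0 w1 hp]].
have sz : size [seq a i | i <- enum 'I_k] = k by rewrite size_map size_enum_ord.
pose h := cast_ord (esym sz).
have hb : bijective h by exists (cast_ord sz) => i; apply: val_inj.
exists (fun i => w' (h i)); split => //.
- by rewrite -w1 (reindex h) //; apply: onW_bij.
- rewrite hp (reindex h) /=; last exact: onW_bij.
  apply: eq_bigr => i _; congr (_ *: rvR R _).
  by rewrite (nth_map i) ?size_enum_ord //= nth_ord_enum.
Qed.

Lemma count_sub_ltn (T : eqType) (a b : pred T) (s : seq T) :
  (forall x, a x -> b x) -> (exists2 x, x \in s & b x && ~~ a x) ->
  (count a s < count b s)%N.
Proof.
move=> hab; elim: s => [|y s IH] [x] //; rewrite in_cons /= => /orP[/eqP ->|hx] hba.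
  case/andP: hba => -> /negbTE -> /=; rewrite add0n add1n ltnS.
  by apply: sub_count => z; apply: hab.
have := IH (ex_intro2 _ _ x hx hba).
case ha : (a y); first by rewrite (hab _ ha) /= !add1n ltnS.
by case: (b y) => /= h; rewrite ?add1n ?add0n // ltnW.
Qed.

Section MaximalDualCells.
Variables (R : realType) (m : nat) (f : tpoly R m).

Definition conv_count (y : 'rV[R]_m) : nat :=
  count (fun e => `[< dual_cell f y (rvR R e) >]) (tp_supp f).

Lemma conv_count_grows y : ~ maximal_dual_cell f y ->
  exists z, (forall p, dual_cell f y p -> dual_cell f z p) /\ (conv_count y < conv_count z)%N.
Proof.
move=> /existsNP [z /not_implyP [hyz hzy]]; exists z; split => //.
have [[e he hne]|hn] :=
  pselect (exists2 e, e \in act f z & ~ dual_cell f y (rvR R e)); last first.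
  exfalso; apply: hzy => p; apply: in_conv_trans => e he.
  by apply: contra_notP hn => hne; exists e.
apply: count_sub_ltn => [e' /asboolP he'|]; first by apply/asboolP/hyz.
exists e; first by move: he; rewrite mem_act => /andP[].
by apply/andP; split; apply/asboolP => //; apply: in_conv_mem.
Qed.

Lemma exists_maximal_dual_cell x :
  exists y, (forall p, dual_cell f x p -> dual_cell f y p) /\ maximal_dual_cell f y.
Proof.
have [k] := ubnP (size (tp_supp f) - conv_count x).
elim: k x => // k IH x hk.
have [hmax|/conv_count_grows [z [hxz hlt]]] := pselect (maximal_dual_cell f x).
  by exists x.
have [|y [hzy hy]] := IH z; last by exists y; split=> // p /hxz /hzy.
have := count_size (fun e => `[< dual_cell f z (rvR R e) >]) (tp_supp f).
by rewrite -/(conv_count z); move: hk hlt; lia.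
Qed.

(* The active set at [x] lies in a maximal cell, a unimodular simplex whose only
   lattice points are its vertices; so the active set is affinely independent. *)
Lemma smooth_act_rank x a0 s :
  smooth f -> act f x = a0 :: s -> \rank (edge_mx R a0 s) = size s.
Proof.
move=> hs hx; have [y [hxy hmax]] := exists_maximal_dual_cell x.
have [a [_ hconv hdet]] := hs y hmax.
have {}hdet : `|\det (simplex_mx a)| = 1 := hdet.
apply: (affine_free_edge_mx_rank (unimodular_affine_free (R := R) hdet)).
  by rewrite -hx act_uniq.
move=> e he; have := hxy _ (in_conv_mem R (e := e) (s := act f x) ltac:(by rewrite hx)).
by move=> /hconv /in_conv_enum [w [w0 w1 hw]]; apply: (unimodular_lattice_vertex hdet w0 w1).
Qed.

End MaximalDualCells.

Section DifferenceMatrix.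
Variables (R : realType) (n m : nat) (A : 'I_n -> seq 'rV[int]_m).

(* Each edge vector [b - head (A i)] is paired with a target value [T i b] for
   its product with an unknown direction. *)
Definition diff_targets (T : 'I_n -> 'rV[int]_m -> R) : seq ('rV[int]_m * R) :=
  flatten [seq [seq (b - head 0 (A i), T i b) | b <- behead (A i)] | i <- enum 'I_n].

Definition diff_mx T : 'M[R]_(size (diff_targets T), m) :=
  \matrix_(k, j) rvR R (nth (0, 0) (diff_targets T) k).1 0 j.

Lemma size_diff_targets T : size (diff_targets T) = (\sum_i (size (A i)).-1)%N.
Proof.
rewrite /diff_targets size_flatten /shape -map_comp sumnE big_map big_enum /=.
by apply: eq_bigr => i _; rewrite size_map size_behead.
Qed.

Lemma mem_diff_targets T i b :
  b \in behead (A i) -> (b - head 0 (A i), T i b) \in diff_targets T.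
Proof.
move=> hb; apply/flattenP; exists [seq (b - head 0 (A i), T i b) | b <- behead (A i)].
  by apply/mapP; exists i; rewrite ?mem_enum.
by apply/mapP; exists b.
Qed.

Lemma diff_mx_mul T (w : 'rV[R]_m) k :
  (diff_mx T *m w^T) k 0 = tdot (nth (0, 0) (diff_targets T) k).1 w.
Proof. by rewrite mxE /tdot; apply: eq_bigr => j _; rewrite !mxE. Qed.

Lemma diff_mx_rank_lt T : (\rank (diff_mx T) < m)%N ->
  exists2 u : 'rV[R]_m, u != 0 &
    forall i e, e \in A i -> tdot e u = tdot (head 0 (A i)) u.
Proof.
move=> hr; set K := kermx (diff_mx T)^T.
have [i hi] : exists i, row i K != 0.
  have hK : K != 0 by rewrite -mxrank_eq0 mxrank_ker mxrank_tr -lt0n subn_gt0.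
  apply/existsP; rewrite -negb_forall; apply: contra hK => /forallP h.
  by apply/eqP/row_matrixP => i; rewrite row0; apply/eqP.
exists (row i K) => // i' e; case E : (A i') => [//|h t] /=.
rewrite inE => /orP[/eqP->//|het]; apply/eqP; rewrite -subr_eq0 -tdotBl.
pose p := (e - h, T i' e).
have hp : p \in diff_targets T by have := @mem_diff_targets T i' e; rewrite E => ->.
have hk : (index p (diff_targets T) < size (diff_targets T))%N by rewrite index_mem.
have h0 : diff_mx T *m (row i K)^T = 0.
  by rewrite -[diff_mx T]trmxK -trmx_mul -row_mul mulmx_ker row0 trmx0.
have := congr1 (fun M : 'M[R]_(size (diff_targets T), 1) => M (Ordinal hk) 0) h0.
by rewrite diff_mx_mul mxE /= nth_index // => ->.
Qed.

Lemma diff_mx_solve T : \rank (diff_mx T) = size (diff_targets T) ->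
  exists w : 'rV[R]_m, forall i b, b \in behead (A i) ->
    tdot b w = tdot (head 0 (A i)) w + T i b.
Proof.
move=> hr.
pose t : 'rV[R]_(size (diff_targets T)) := \row_k (nth (0, 0) (diff_targets T) k).2.
have hf : row_full (diff_mx T)^T by rewrite /row_full mxrank_tr hr.
have [D hD] := submxP (submx_full t hf).
exists D => i b hb; apply/eqP; rewrite addrC -subr_eq -tdotBl; apply/eqP.
pose p := (b - head 0 (A i), T i b).
have hk : (index p (diff_targets T) < size (diff_targets T))%N.
  by rewrite index_mem mem_diff_targets.
have := congr1 (fun M : 'M[R]_(1, size (diff_targets T)) => M 0 (Ordinal hk)) hD.
rewrite /t mxE nth_index ?mem_diff_targets //= => ->.
by rewrite -[in RHS](trmxK D) -trmx_mul mxE diff_mx_mul /= nth_index ?mem_diff_targets.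
Qed.

End DifferenceMatrix.

Lemma sum_predn_card_succ n (s : 'I_n -> nat) :
  (forall i, 2 <= s i)%N -> (\sum_i (s i).-1 = n.+1)%N ->
  exists j, s j = 3%N /\ forall i, i != j -> s i = 2%N.
Proof.
move=> h2 hs.
have ht : (\sum_i (s i).-2 = 1)%N.
  have : (\sum_i (s i).-1 = \sum_i (s i).-2 + \sum_(i < n) 1)%N.
    by rewrite -big_split /=; apply: eq_bigr => i _; have := h2 i; lia.
  by rewrite sum1_card card_ord hs; lia.
have [j hj|hn] := pickP (fun i => (s i).-2 != 0%N); last first.
  by move: ht; rewrite big1 // => i _; have := hn i; move/negbFE/eqP.
exists j; move: ht; rewrite (bigD1 j) //= => ht.
have /eqP : (\sum_(i | i != j) (s i).-2 = 0)%N.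
  by move: hj ht; set x := (s j).-2; set y := bigop _ _ _; lia.
rewrite sum_nat_eq0 => /forallP hr; split.
  by move: hj ht; have := h2 j; lia.
by move=> i hi; have := implyP (hr i) hi; have := h2 i; lia.
Qed.

Section CurveCells.
Variables (R : realType) (n m : nat) (F : 'I_n -> tpoly R m).

Lemma cellJ_refl J x : cellJ F J x x.
Proof. by move=> i _ e. Qed.

Lemma cellJ_setT_eq x y :
  cellJ F setT x = cellJ F setT y <-> forall i, act (F i) x =i act (F i) y.
Proof.
split=> [h i e|h].
  have hxy : cellJ F setT x y by rewrite h; apply: cellJ_refl.
  have hyx : cellJ F setT y x by rewrite -h; apply: cellJ_refl.
  by apply/idP/idP; [exact: hxy i (in_setT i) e | exact: hyx i (in_setT i) e].
apply: funext => z; apply: propext.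
by split=> hz i hi e he; apply: (hz i hi); rewrite ?h // -h.
Qed.

End CurveCells.

Section CurveVertex.
Variables (R : realType) (n : nat) (F : 'I_n -> tpoly R n.+1) (v : 'rV[R]_n.+1).
Hypotheses (n_ge2 : (2 <= n)%N) (F_smooth : forall i, smooth (F i))
  (F_transversal : transversal_inter F) (v_vertex : is_vertex F v).

Lemma vertex_act_size i : (2 <= size (act (F i) v))%N.
Proof. by case: v_vertex => hv _; apply: hv; rewrite in_setT. Qed.

Lemma curve_cell_affdim_lt2 y : inIJ F setT y -> ~ affdim_ge (cellJ F setT y) 2.
Proof.
have hcard : #|[set: 'I_n]| = n by rewrite cardsT card_ord.
have [[_ hdim] _] := F_transversal (J := setT) ltac:(by rewrite hcard).
by rewrite hcard subSnn in hdim; apply: hdim.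
Qed.

Lemma vertex_sum_leq : (\sum_i (size (act (F i) v)).-1 <= n.+1)%N.
Proof.
have hadim i : adim (dual_cell (F i) v) (size (act (F i) v)).-1.
  rewrite /dual_cell; case E : (act (F i) v) => [|a0 s].
    by have := vertex_act_size i; rewrite E.
  exact: adim_conv (smooth_act_rank (@F_smooth i) E).
have [_ htr] := F_transversal (J := setT) ltac:(by rewrite cardsT card_ord).
have [/affdim_ge_leq + _] := htr v v_vertex.1 _ (fun i _ => hadim i).
by rewrite (eq_bigl xpredT) // => i; rewrite in_setT.
Qed.

(* A direction orthogonal to all edge vectors of the active sets keeps every
   active set, so it would move [v] inside its own cell. *)
Lemma vertex_diff_rank (T : 'I_n -> 'rV[int]_n.+1 -> R) :
  \rank (diff_mx (fun i => act (F i) v) T) = n.+1.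
Proof.
apply/eqP; rewrite eqn_leq rank_leq_col leqNgt; apply/negP => /diff_mx_rank_lt.
case=> u u0 hu; have [e e0 he] := act_family_near0 F v u.
apply: v_vertex.2.2.
apply: (affdim_ge1 (y := v + e *: u) (cellJ_refl (F := F) (J := setT) (x := v))).
  move=> i _ a ha; rewrite he ha /=; apply/allP => b hb.
  by rewrite (hu i b hb) (hu i a ha).
move/(congr1 (fun y => y - v)); rewrite subrr addrC addKr => /esym/eqP.
by rewrite scaler_eq0 (gt_eqF e0) /= (negbTE u0).
Qed.

Lemma vertex_sum_eq : (\sum_i (size (act (F i) v)).-1 = n.+1)%N.
Proof.
apply/eqP; rewrite eqn_leq vertex_sum_leq /=.
have := rank_leq_row (diff_mx (fun i => act (F i) v) (fun _ _ => 0 : R)).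
by rewrite vertex_diff_rank size_diff_targets.
Qed.

Lemma vertex_act_sizes :
  exists j, size (act (F j) v) = 3%N /\ forall i, i != j -> size (act (F i) v) = 2%N.
Proof. exact: sum_predn_card_succ vertex_act_size vertex_sum_eq. Qed.

(* The edge vectors of the active sets form a basis, so the values of a
   direction on them can be prescribed at will. *)
Lemma vertex_direction j (P : pred 'rV[int]_n.+1) :
  exists w (c : 'I_n -> R), forall i e, e \in act (F i) v ->
    tdot e w = c i + ((i == j) && P e)%:R.
Proof.
pose t i (e : 'rV[int]_n.+1) : R := ((i == j) && P e)%:R.
pose T i e := t i e - t i (head 0 (act (F i) v)).
have [|w hw] := diff_mx_solve (A := fun i => act (F i) v) (T := T).
  by rewrite vertex_diff_rank size_diff_targets vertex_sum_eq.
exists w, (fun i => tdot (head 0 (act (F i) v)) w - t i (head 0 (act (F i) v))).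
move=> i e; case E : (act (F i) v) => [//|h s]; rewrite inE => /orP[/eqP->|he] /=.
  by rewrite subrK.
by rewrite (hw i e) ?E // /T /t E /=; ring.
Qed.

Lemma point_near_vertex j (P : pred 'rV[int]_n.+1) : has P (act (F j) v) ->
  exists x, forall i e, (e \in act (F i) x) = (e \in act (F i) v) && ((i != j) || P e).
Proof.
move=> /hasP [p hp Pp]; have [w [c hw]] := vertex_direction j P.
have [e e0 he] := act_family_near0 F v w; exists (v + e *: w) => i a.
rewrite he; case ha : (a \in act (F i) v) => //=.
apply/allP/idP => [hall|hPa b hb]; last first.
  rewrite (hw i b) // (hw i a) // lerD2l ler_nat.
  by move: hPa; case: (i == j) => //= ->; apply: leq_b1.
case: eqP => [eij|//]; subst i.
by have := hall p hp; rewrite (hw j p) // (hw j a) // lerD2l ler_nat eqxx Pp; case: (P a).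
Qed.

Lemma edge_of_sub_act x :
  (forall i, {subset act (F i) x <= act (F i) v}) ->
  (forall i, 2 <= size (act (F i) x))%N ->
  ~ (forall i, {subset act (F i) v <= act (F i) x}) ->
  is_edge F (cellJ F setT x) /\ cellJ F setT x v.
Proof.
move=> hsub h2 hne; have hv : cellJ F setT x v by move=> i _; apply: hsub.
have hx : inIJ F setT x by move=> i _; apply: h2.
split=> //; exists x; split=> //; split; last exact: curve_cell_affdim_lt2.
apply: (affdim_ge1 (cellJ_refl (F := F) (J := setT) (x := x)) hv) => exv.
by apply: hne => i e; rewrite exv.
Qed.

Lemma edge_through_vertex_act E : is_edge F E -> E v ->
  exists x, [/\ E = cellJ F setT x, forall i, {subset act (F i) x <= act (F i) v},
    forall i, (2 <= size (act (F i) x))%N &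
    ~ (forall i, {subset act (F i) v <= act (F i) x})].
Proof.
move=> [x [hx -> [hdim _]]] hxv; exists x; split=> // [i|i|hsup].
- exact: hxv i (in_setT i).
- exact: hx i (in_setT i).
have : cellJ F setT x = cellJ F setT v.
  by apply/cellJ_setT_eq => i e; apply/idP/idP; [apply: hxv | apply: hsup].
by move=> hxv'; apply: v_vertex.2.2; rewrite -hxv'.
Qed.

Section TripleActiveSet.
Variable j : 'I_n.
Hypotheses (j_size3 : size (act (F j) v) = 3%N)
  (others_size2 : forall i, i != j -> size (act (F i) v) = 2%N).

(* [x] lies on the edge through [v] obtained by dropping [r] from the active
   set of [f_j]. *)
Definition omits_at (r : 'rV[int]_n.+1) (x : 'rV[R]_n.+1) : Prop :=
  forall i e, (e \in act (F i) x) = (e \in act (F i) v) && ((i != j) || (e != r)).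

Lemma size_omit r : r \in act (F j) v ->
  size [seq e <- act (F j) v | e != r] = 2%N.
Proof.
move=> hr; rewrite size_filter.
have := count_predC (pred1 r) (act (F j) v).
rewrite count_uniq_mem ?act_uniq // hr j_size3 => -[<-].
exact: eq_count.
Qed.

Lemma omits_at_edge r : r \in act (F j) v ->
  exists x, [/\ omits_at r x, is_edge F (cellJ F setT x) & cellJ F setT x v].
Proof.
move=> hr; have hP : has (predC1 r) (act (F j) v).
  have := act_uniq (F j) v; case: (act (F j) v) j_size3 => [|a [|b s]] // _.
  move=> /andP[+ _]; rewrite inE => /norP[hab _]; apply/hasP.
  case: (eqVneq a r) => [ar|ar]; [exists b | exists a]; rewrite ?inE ?eqxx ?orbT //=.
  by rewrite -ar eq_sym.
have [x hx] := point_near_vertex hP.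
suff [] : is_edge F (cellJ F setT x) /\ cellJ F setT x v by exists x.
apply: edge_of_sub_act => [i e|i|hall].
- by rewrite hx => /andP[].
- case: (eqVneq i j) => [->|hij].
    have hperm : perm_eq (act (F j) x) [seq e <- act (F j) v | e != r].
      apply: uniq_perm; [exact: act_uniq | exact: filter_uniq (act_uniq _ _) | move=> e].
      by rewrite hx mem_filter eqxx andbC.
    by rewrite (perm_size hperm) size_omit.
  apply: leq_trans (vertex_act_size i) (uniq_leq_size (act_uniq _ _) _).
  by move=> e he; rewrite hx he hij.
- by have := hall j r hr; rewrite hx hr /= !eqxx.
Qed.

Lemma edge_omits_at E : is_edge F E -> E v ->
  exists2 r, r \in act (F j) v & exists2 x, omits_at r x & E = cellJ F setT x.
Proof.
move=> hE hEv; have [x [-> hsub h2 hne]] := edge_through_vertex_act hE hEv.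
have hothers i : i != j -> act (F i) x =i act (F i) v.
  by move=> hij; apply: (uniq_min_size (act_uniq _ _) (hsub i) _).2; rewrite others_size2.
have [r hrv hrx] : exists2 r, r \in act (F j) v & r \notin act (F j) x.
  apply: contra_notP hne => hno i; case: (eqVneq i j) => [->|hij] e he.
    by apply: contra_notP hno => hex; exists e => //; apply/negP.
  by rewrite hothers.
exists r => //; exists x => // i e; case: (eqVneq i j) => [->|hij] /=; last first.
  by rewrite hothers ?andbT.
have -> : (e \in act (F j) v) && (e != r) = (e \in [seq e <- act (F j) v | e != r]).
  by rewrite mem_filter andbC.
apply: (uniq_min_size (act_uniq _ _) _ _).2.
  by move=> e' he'; rewrite mem_filter hsub ?andbT //; apply: contraTneq he' => ->.
by rewrite size_omit.
Qed.

Lemma omits_at_cell_eq r r' x y : r' \in act (F j) v ->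
  omits_at r x -> omits_at r' y -> cellJ F setT x = cellJ F setT y <-> r = r'.
Proof.
move=> hr' hx hy; split=> [|rr']; last by apply/cellJ_setT_eq => i e; rewrite hx hy rr'.
move/cellJ_setT_eq/(_ j r'); rewrite hx hy hr' !eqxx /=.
by move/negbFE/eqP.
Qed.

End TripleActiveSet.

End CurveVertex.

Theorem lemma3p1 (R : realType) (n : nat) (F : 'I_n -> tpoly R n.+1) :
  (2 <= n)%N ->
  (forall i, smooth (F i)) ->
  transversal_inter F ->
  forall v : 'rV[R]_n.+1, is_vertex F v ->
    exists E1 E2 E3 : 'rV[R]_n.+1 -> Prop,
      [/\ is_edge F E1, is_edge F E2 & is_edge F E3] /\
      [/\ E1 v, E2 v & E3 v] /\
      [/\ E1 <> E2, E1 <> E3 & E2 <> E3] /\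
      (forall E, is_edge F E -> E v -> E = E1 \/ E = E2 \/ E = E3).
Proof.
move=> n_ge2 F_smooth F_transversal v v_vertex.
have [j [j_size3 others_size2]] := vertex_act_sizes n_ge2 F_smooth F_transversal v_vertex.
have edge_omitting := omits_at_edge n_ge2 F_smooth F_transversal v_vertex j_size3.
have edge_classified := edge_omits_at v_vertex j_size3 others_size2.
have := act_uniq (F j) v; case Aj : (act (F j) v) j_size3 => [|a [|b [|c [|]]]] // _.
rewrite /= !inE !negb_or andbT => /andP[/andP[nab nac] nbc].
have [ha hb hc] : [/\ a \in act (F j) v, b \in act (F j) v & c \in act (F j) v].
  by rewrite Aj !inE !eqxx !orbT.
have [xa [oa ea va]] := edge_omitting a ha.
have [xb [ob eb vb]] := edge_omitting b hb.
have [xc [oc ec vc]] := edge_omitting c hc.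
exists (cellJ F setT xa), (cellJ F setT xb), (cellJ F setT xc).
split; first by split.
split; first by split.
split; first split.
- by move/(omits_at_cell_eq hb oa ob)/eqP; rewrite (negbTE nab).
- by move/(omits_at_cell_eq hc oa oc)/eqP; rewrite (negbTE nac).
- by move/(omits_at_cell_eq hc ob oc)/eqP; rewrite (negbTE nbc).
move=> E hE hEv; have [r hr [x ox ->]] := edge_classified E hE hEv.
move: hr; rewrite Aj !inE => /or3P[] /eqP rr.
- by left; apply/(omits_at_cell_eq ha ox oa).
- by right; left; apply/(omits_at_cell_eq hb ox ob).
- by right; right; apply/(omits_at_cell_eq hc ox oc).
Qed.
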